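(* There is an absolute constant $C$ such that the following holds. Let $0<\epsilon\le1$, let $X\subset\mathbb{R}^2$ be a finite set of points with pairwise distinct $x$-coordinates, and let $A\subseteq X$ be an $\epsilon$-approximation for $X$ with respect to the ranges given by parallelograms (intersections of two closed slabs, each slab being the region between two parallel lines), with $|A|\ge\max(2,1/\epsilon)$. Then for every real slope $s$, $|\rho_X(s)-\rho_A(s)|\le C\epsilon^{1/3}$.
   Context: For a finite set $Y\subset\mathbb{R}^2$ with $|Y|\ge2$ and pairwise distinct $x$-coordinates, and a real number $s$, $\rho_Y(s)$ denotes the number of unordered pairs $\{a,b\}\subseteq Y$, $a\ne b$, such that the line through $a$ and $b$ has slope less than $s$, divided by $\binom{|Y|}{2}$ (the normalized position of $s$ in the sorted sequence of pairwise slopes). For a finite set $X$ and a family $\mathcal{R}$ of subsets of the plane, $A\subseteq X$ is an $\epsilon$-approximation for $X$ with respect to $\mathcal{R}$ if $\left|\frac{|A\cap R|}{|A|}-\frac{|X\cap R|}{|X|}\right|\le\epsilon$ for every $R\in\mathcal{R}$. *)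

From Stdlib Require Import Rdefinitions.
From HB Require Import structures.
From mathcomp Require Import all_boot all_order all_algebra.
From mathcomp Require Import all_classical all_reals.
From mathcomp Require Import Rstruct exp.
Set Implicit Arguments. Unset Strict Implicit. Unset Printing Implicit Defensive.
Import Order.TTheory GRing.Theory Num.Theory.
Local Open Scope ring_scope.

Notation pt2 := (R * R)%type.

Definition slope (a b : pt2) : R := (b.2 - a.2) / (b.1 - a.1).

Definition npairs_below (Y : seq pt2) (s : R) : nat :=
  \sum_(i < size Y) \sum_(j < size Y | (i < j)%N)
     nat_of_bool (slope (nth (0%R,0%R) Y i) (nth (0%R,0%R) Y j) < s)%R.

Definition rho (Y : seq pt2) (s : R) : R :=
  (npairs_below Y s)%:R / ('C(size Y, 2))%:R.

Definition slab (u : pt2) (c1 c2 : R) (p : pt2) : bool :=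
  (c1 <= u.1 * p.1 + u.2 * p.2) && (u.1 * p.1 + u.2 * p.2 <= c2).

Definition is_slab (S : pt2 -> bool) : Prop :=
  exists (u : pt2) (c1 c2 : R), u != (0%R, 0%R) /\ c1 < c2 /\ S = slab u c1 c2.

Definition is_parallelogram_range (P : pt2 -> bool) : Prop :=
  exists S1 S2, is_slab S1 /\ is_slab S2 /\ P = (fun p => S1 p && S2 p).

Definition eps_approx (eps : R) (A X : seq pt2) : Prop :=
  forall P : pt2 -> bool, is_parallelogram_range P ->
    `| (count P A)%:R / (size A)%:R - (count P X)%:R / (size X)%:R | <= eps.

From Stdlib Require Import Rdefinitions.
From HB Require Import structures.
From mathcomp Require Import all_boot all_order all_algebra.
From mathcomp Require Import all_classical all_reals.
From mathcomp Require Import Rstruct exp.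
From mathcomp Require Import lra ring zify.
Set Implicit Arguments. Unset Strict Implicit. Unset Printing Implicit Defensive.
Local Open Scope ring_scope.
Import Order.TTheory GRing.Theory Num.Theory.
Local Open Scope ring_scope.

(* Shear the plane so that lines of slope [s] become horizontal, i.e. replace the
   y-coordinate of [q] by its intercept [q.2 - s * q.1].  A pair [p, q] with
   [p.1 < q.1] then has slope below [s] iff [q] lies strictly below [p] in the
   new coordinate, so [rho_Y(s)] is, up to [O(1/|Y|)], twice the mean over
   [p in Y] of the fraction [g_Y(p)] of [Y] in the open lower-right quadrant of
   [p].  On a finite set such a quadrant is a parallelogram range, so replacing
   [g_A] by [g_X] in the mean over [A] costs [eps].  To compare the means of [g_X]
   over [A] and over [X], cut the plane into a [(k+1) x (k+1)] grid of sheared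
   boxes given by the [k]-quantiles of [X] in both coordinates: [g_X] oscillates
   by less than [2/k] on each cell, and each cell is again a parallelogram range,
   so the means differ by at most [(k+1)^2 eps + 4/k].  Taking [k ~ eps^(-1/3)]
   gives the bound [O(eps^(1/3))]. *)

Definition convex_pred (I : pred R) :=
  forall a b c : R, a <= b -> b <= c -> I a -> I c -> I b.

Lemma exists_gap_above (V : seq R) (b : R) :
  exists2 c, b < c & forall v, v \in V -> b < v -> c < v.
Proof.
elim: V => [|v V [c bc Hc]]; first by exists (b + 1) => //; lra.
have [bv|vb] := ltP b v.
- exists (Num.min c ((b + v) / 2)); first by rewrite lt_min bc /=; lra.
  move=> w; rewrite inE => /orP[/eqP -> _|wV bw]; rewrite gt_min.
    by apply/orP; right; lra.
  by rewrite Hc.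
- exists c => // w; rewrite inE => /orP[/eqP ->|/Hc//]; lra.
Qed.

Lemma exists_gap_below (V : seq R) (a : R) :
  exists2 c, c < a & forall v, v \in V -> v < a -> v < c.
Proof.
have [c ac Hc] := exists_gap_above (map -%R V) (- a).
exists (- c); first by rewrite ltrNl.
by move=> v vV va; rewrite ltrNr Hc ?map_f ?ltrN2.
Qed.

Lemma exists_seq_max (W : seq R) : W != [::] ->
  exists2 b, b \in W & forall w, w \in W -> w <= b.
Proof.
elim: W => // v [|u W] IH _.
  by exists v; rewrite ?inE // => w; rewrite inE => /eqP ->.
have [b bW Hb] := IH isT.
have [vb|bv] := lerP v b.
- exists b; first by rewrite inE bW orbT.
  by move=> w; rewrite inE => /orP[/eqP ->|/Hb].
- exists v; first by rewrite inE eqxx.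
  by move=> w; rewrite inE => /orP[/eqP ->//|/Hb]; lra.
Qed.

Lemma exists_seq_min (W : seq R) : W != [::] ->
  exists2 a, a \in W & forall w, w \in W -> a <= w.
Proof.
move=> W0; have [|b] := @exists_seq_max (map -%R W).
  by rewrite -size_eq0 size_map size_eq0.
case/mapP=> a aW -> Ha; exists a => // w wW.
by rewrite -lerN2 Ha ?map_f.
Qed.

Lemma exists_strict_upper_bound (V : seq R) :
  exists M, forall v, v \in V -> v < M.
Proof.
elim: V => [|v V [M HM]]; first by exists 0.
have Mm : M <= Num.max M v by rewrite le_max lexx.
have vm : v <= Num.max M v by rewrite le_max lexx orbT.
by exists (Num.max M v + 1) => w; rewrite inE => /orP[/eqP ->|/HM]; lra.
Qed.

(* The gaps around the extreme points matter: the ranges are closed slabs, while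
   the predicates to be realised (open quadrants, quantile classes) need not be. *)
Lemma convex_pred_on_seq (I : pred R) (V : seq R) : convex_pred I ->
  exists c1 c2, c1 < c2 /\ forall v, v \in V -> I v = (c1 <= v <= c2).
Proof.
move=> convI; have [W0|W0] := eqVneq ([seq v <- V | I v]) [::].
  have [M HM] := exists_strict_upper_bound V.
  exists M, (M + 1); split=> [|v vV]; first lra.
  have -> : I v = false by move: (mem_filter I v V); rewrite W0 vV andbT => <-.
  by have := HM v vV; case: lerP => //; lra.
have [a] := exists_seq_min W0; rewrite mem_filter => /andP[Ia aV] Ha.
have [b] := exists_seq_max W0; rewrite mem_filter => /andP[Ib bV] Hb.
have [c1 c1a Hc1] := exists_gap_below V a.
have [c2 bc2 Hc2] := exists_gap_above V b.
have ab : a <= b by apply: Hb; rewrite mem_filter Ia.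
exists c1, c2; split=> [|v vV]; first lra.
apply/idP/andP => [Iv|[c1v vc2]].
  have vW : v \in [seq v <- V | I v] by rewrite mem_filter Iv.
  by have := Ha v vW; have := Hb v vW; split; lra.
have av : a <= v by case: (ltP v a) => // /(Hc1 v vV); lra.
have vb : v <= b by case: (ltP b v) => // /(Hc2 v vV); lra.
exact: convI av vb Ia Ib.
Qed.

Lemma convex_pred_level (f : R -> nat) (i : nat) :
  {homo f : a b / a <= b >-> (a <= b)%N} -> convex_pred (fun v => f v == i).
Proof.
move=> fmono a b c ab bc /eqP fa /eqP fc.
by have := fmono _ _ ab; have := fmono _ _ bc; rewrite fa fc => h1 h2; apply/eqP; lia.
Qed.

Section Averages.

Variable T : eqType.
Implicit Types (Y A X : seq T) (P Q : pred T).

(* [%R] is needed: at type [R], [/] would otherwise be read as Stdlib's [Rdiv]. *)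
Definition frac Y P : R := ((count P Y)%:R / (size Y)%:R)%R.

Definition mean Y (f : T -> R) : R := ((\sum_(p <- Y) f p) / (size Y)%:R)%R.

Lemma count_le_add (P Q1 Q2 : pred T) Y :
  (forall x, P x <= Q1 x + Q2 x)%N -> (count P Y <= count Q1 Y + count Q2 Y)%N.
Proof. by move=> H; elim: Y => //= x Y IH; have := H x; lia. Qed.

Lemma frac_dist_le P Q Y :
  `|frac Y P - frac Y Q| <= frac Y (fun x => P x != Q x).
Proof.
have le_xor (P1 P2 : pred T) :
    (count P1 Y <= count P2 Y + count (fun x => P1 x != P2 x) Y)%N.
  by apply: count_le_add => x; case: (P1 x); case: (P2 x).
have h1 := le_xor P Q; have h2 := le_xor Q P.
have E : count (fun x => Q x != P x) Y = count (fun x => P x != Q x) Y.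
  by apply: eq_count => x; rewrite eq_sym.
rewrite E in h2.
rewrite /frac -mulrBl normrM [`|_^-1|]ger0_norm ?invr_ge0 // ler_wpM2r ?invr_ge0 //.
move: h1 h2; rewrite -!(ler_nat R) !natrD ler_norml => h1 h2; apply/andP; split; lra.
Qed.

Lemma sumr_const_cond Y Q (c : R) :
  \sum_(p <- Y | Q p) c = (count Q Y)%:R * c.
Proof. by rewrite big_const_seq iter_addr_0 mulr_natl. Qed.

Lemma sum_near_const Y Q (f : T -> R) (h d : R) :
  (forall p, p \in Y -> Q p -> `|f p - h| <= d) ->
  `|(\sum_(p <- Y | Q p) f p) / (size Y)%:R - frac Y Q * h| <= frac Y Q * d.
Proof.
move=> Hf; rewrite /frac mulrAC -mulrBl normrM [`|_^-1|]ger0_norm ?invr_ge0 //.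
rewrite [_ * d]mulrAC; apply: ler_wpM2r; first by rewrite invr_ge0.
rewrite -!sumr_const_cond -sumrB.
apply: le_trans (ler_norm_sum _ _ _) _.
by rewrite big_seq_cond [X in _ <= X]big_seq_cond; apply: ler_sum => p /andP[]; exact: Hf.
Qed.

Lemma cell_sum_dist_le A X Q (f : T -> R) (eps d : R) :
  {subset A <= X} -> `|frac A Q - frac X Q| <= eps ->
  (forall p r, p \in X -> r \in X -> Q p -> Q r -> `|f p - f r| <= d) ->
  (forall p, 0 <= f p <= 1) ->
  `|(\sum_(p <- A | Q p) f p) / (size A)%:R - (\sum_(p <- X | Q p) f p) / (size X)%:R|
    <= eps + d * (frac A Q + frac X Q).
Proof.
move=> sAX HQ Hf f01.
have [h /andP[h0 h1] Hh] : exists2 h, 0 <= h <= 1 &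
    forall p, p \in X -> Q p -> `|f p - h| <= d.
  have [/hasP[r rX Qr]|noQ] := boolP (has Q X).
    by exists (f r) => [|p pX Qp]; [exact: f01 | exact: Hf].
  by exists 0 => [|p pX Qp]; [rewrite lexx ler01 | move/hasPn: noQ => /(_ p pX); rewrite Qp].
have HA := sum_near_const (fun p pA => Hh p (sAX p pA)).
have HX := sum_near_const Hh.
have Heps : `|h * (frac A Q - frac X Q)| <= eps.
  by rewrite normrM ger0_norm //; apply: le_trans HQ; rewrite ler_piMl.
set SA := _ / (size A)%:R in HA *; set SX := _ / (size X)%:R in HX *.
have -> : SA - SX = (SA - frac A Q * h) + h * (frac A Q - frac X Q)
                    - (SX - frac X Q * h) by ring.
rewrite [d * _]mulrDr; apply: le_trans (ler_normB _ _) _.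
by apply: le_trans (lerD (ler_normD _ _) HX) _; lra.
Qed.

Lemma big_seq_partition (K : finType) (cell : T -> K) Y (F : T -> R) :
  \sum_(p <- Y) F p = \sum_(t : K) \sum_(p <- Y | cell p == t) F p.
Proof.
under [RHS]eq_bigr do rewrite big_mkcond.
rewrite exchange_big; apply: eq_bigr => p _ /=; rewrite -big_mkcond /=.
by under eq_bigl do rewrite eq_sym; rewrite big_pred1_eq.
Qed.

Lemma sum_frac_cells (K : finType) (cell : T -> K) Y : (0 < size Y)%N ->
  \sum_(t : K) frac Y (fun p => cell p == t) = 1.
Proof.
move=> Y0; rewrite /frac -mulr_suml.
under eq_bigr do rewrite -[(count _ _)%:R]mulr1 -sumr_const_cond.
rewrite -big_seq_partition sumr_const_cond count_predT mulr1.
by rewrite divff // pnatr_eq0 -lt0n.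
Qed.

Lemma mean_partition_dist_le (K : finType) (cell : T -> K) A X (f : T -> R) (eps d : R) :
  (0 < size A)%N -> (0 < size X)%N -> {subset A <= X} ->
  (forall t, `|frac A (fun p => cell p == t) - frac X (fun p => cell p == t)| <= eps) ->
  (forall p r, p \in X -> r \in X -> cell p = cell r -> `|f p - f r| <= d) ->
  (forall p, 0 <= f p <= 1) ->
  `|mean A f - mean X f| <= #|K|%:R * eps + 2 * d.
Proof.
move=> A0 X0 sAX Heps Hf f01.
rewrite /mean !(big_seq_partition cell) !mulr_suml -sumrB.
apply: le_trans (ler_norm_sum _ _ _) _.
have osc t p r : p \in X -> r \in X -> cell p == t -> cell r == t -> `|f p - f r| <= d.
  by move=> pX rX /eqP pt /eqP rt; apply: Hf; rewrite ?pt ?rt.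
apply: le_trans (ler_sum _ (fun t _ => cell_sum_dist_le sAX (Heps t) (osc t) f01)) _.
rewrite big_split /= sumr_const -mulr_natl -mulr_sumr big_split /=.
by rewrite !sum_frac_cells //; lra.
Qed.

Lemma mean_dist_le Y (f g : T -> R) (eps : R) : (0 < size Y)%N ->
  (forall p, p \in Y -> `|f p - g p| <= eps) -> `|mean Y f - mean Y g| <= eps.
Proof.
move=> Y0 Hfg; rewrite /mean -mulrBl -sumrB normrM [`|_^-1|]ger0_norm ?invr_ge0 //.
rewrite ler_pdivrMr ?ltr0n // mulrC -(count_predT Y) -sumr_const_cond.
apply: le_trans (ler_norm_sum _ _ _) _.
by rewrite big_seq_cond [X in _ <= X]big_seq_cond; apply: ler_sum => p /andP[/Hfg].
Qed.

End Averages.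

Lemma count_subpred_xor (T : Type) (P Q : pred T) (s : seq T) : subpred P Q ->
  count Q s = (count P s + count (fun x => P x != Q x) s)%N.
Proof.
move=> PQ; elim: s => //= x s ->; have := PQ x.
by case: (P x); case: (Q x) => /= h; first (by lia); [have := h isT | lia | lia].
Qed.

Section Quantiles.

Variables (T : Type) (X : seq T) (k : nat).

Definition quantile_index (P : pred T) : nat := (k * count P X) %/ size X.

Lemma quantile_index_lt P : (quantile_index P < k.+1)%N.
Proof.
rewrite /quantile_index; have [->|X0] := posnP (size X); first by rewrite divn0.
by rewrite ltnS -[leqRHS](mulnK k X0) leq_div2r // leq_mul2l count_size orbT.
Qed.

Lemma quantile_index_mono P Q : subpred P Q -> (quantile_index P <= quantile_index Q)%N.
Proof. by move=> PQ; apply/leq_div2r/leq_mul/sub_count. Qed.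

Lemma quantile_index_eq P Q : (0 < size X)%N -> subpred P Q \/ subpred Q P ->
  quantile_index P = quantile_index Q -> (k * count (fun x => P x != Q x) X < size X)%N.
Proof.
move=> X0; wlog PQ : P Q / subpred P Q => [wlogPQ [PQ|QP] E|].
- exact: wlogPQ PQ (or_introl PQ) E.
- rewrite (eq_count (a2 := fun x => Q x != P x)); last by move=> x; rewrite eq_sym.
  exact: wlogPQ QP (or_introl QP) (esym E).
move=> _; rewrite /quantile_index (count_subpred_xor X PQ).
set a := count P X; set b := count _ X => E.
have := divn_eq (k * a) (size X); have := divn_eq (k * (a + b)) (size X).
have := ltn_pmod (k * a) X0; have := ltn_pmod (k * (a + b)) X0.
rewrite -E; nia.
Qed.

End Quantiles.

Definition intercept (s : R) (q : pt2) : R := (q.2 - s * q.1)%R.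

Lemma sheared_box_parallelogram (s : R) (X : seq pt2) (I1 I2 : pred R) :
  convex_pred I1 -> convex_pred I2 ->
  exists2 P, is_parallelogram_range P &
    forall q, q \in X -> P q = I1 q.1 && I2 (intercept s q).
Proof.
move=> conv1 conv2.
have [c1 [c2 [c12 Hc]]] := convex_pred_on_seq (map fst X) conv1.
have [d1 [d2 [d12 Hd]]] := convex_pred_on_seq (map (intercept s) X) conv2.
exists (fun p => slab (1, 0) c1 c2 p && slab (- s, 1) d1 d2 p).
  exists (slab (1, 0) c1 c2), (slab (- s, 1) d1 d2); split; last split=> //.
    by exists (1, 0), c1, c2; rewrite xpair_eqE oner_eq0.
  by exists (- s, 1), d1, d2; rewrite xpair_eqE oner_eq0 andbF.
move=> q qX; rewrite /slab /= mul1r mul0r addr0 Hc ?map_f //.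
by rewrite Hd ?map_f // /intercept mul1r mulNr addrC.
Qed.

Lemma eps_approx_sheared_box (s eps : R) (A X : seq pt2) (I1 I2 : pred R) :
  convex_pred I1 -> convex_pred I2 -> {subset A <= X} -> eps_approx eps A X ->
  `|frac A (fun q => I1 q.1 && I2 (intercept s q))
    - frac X (fun q => I1 q.1 && I2 (intercept s q))| <= eps.
Proof.
move=> conv1 conv2 sAX approx.
have [P Ppar PX] := sheared_box_parallelogram s X conv1 conv2.
rewrite /frac -(eq_in_count (a1 := P)) => [|q /sAX/PX //].
by rewrite -(eq_in_count (a1 := P)) => [|q /PX //]; apply: approx.
Qed.

Definition below_right (s : R) (p q : pt2) : bool :=
  (p.1 < q.1) && (intercept s q < intercept s p).

Lemma eps_approx_below_right (s eps : R) (A X : seq pt2) (p : pt2) :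
  {subset A <= X} -> eps_approx eps A X ->
  `|frac A (below_right s p) - frac X (below_right s p)| <= eps.
Proof.
apply: (@eps_approx_sheared_box s eps A X (fun v => p.1 < v) (fun v => v < intercept s p)).
- by move=> a b c ab _ pa _; apply: lt_le_trans ab.
- by move=> a b c _ bc _ cp; apply: le_lt_trans cp.
Qed.

Section Grid.

Variables (s : R) (X : seq pt2) (k : nat).

Definition xquantile (p : pt2) : nat := quantile_index X k (fun q => q.1 <= p.1).
Definition yquantile (p : pt2) : nat :=
  quantile_index X k (fun q => intercept s q < intercept s p).

Definition grid_cell (p : pt2) : 'I_k.+1 * 'I_k.+1 :=
  (Ordinal (quantile_index_lt X k (fun q => q.1 <= p.1)),
   Ordinal (quantile_index_lt X k (fun q => intercept s q < intercept s p))).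

Lemma grid_cell_eq p r : grid_cell p = grid_cell r ->
  xquantile p = xquantile r /\ yquantile p = yquantile r.
Proof. by case=> ex ey. Qed.

Lemma frac_below_right_osc p r : (0 < size X)%N -> (0 < k)%N ->
  xquantile p = xquantile r -> yquantile p = yquantile r ->
  `|frac X (below_right s p) - frac X (below_right s r)| <= 2 / k%:R.
Proof.
move=> X0 k0 Ex Ey.
have nx : subpred (fun q : pt2 => q.1 <= p.1) (fun q : pt2 => q.1 <= r.1) \/
          subpred (fun q : pt2 => q.1 <= r.1) (fun q : pt2 => q.1 <= p.1).
  by case: (leP p.1 r.1) => [pr|/ltW rp]; [left|right] => q /le_trans; apply.
have ny : subpred (fun q => intercept s q < intercept s p)
                  (fun q => intercept s q < intercept s r) \/
          subpred (fun q => intercept s q < intercept s r)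
                  (fun q => intercept s q < intercept s p).
  by case: (leP (intercept s p) (intercept s r)) => [pr|/ltW rp]; [left|right]
    => q /lt_le_trans; apply.
have hx := quantile_index_eq X0 nx Ex; have hy := quantile_index_eq X0 ny Ey.
have hxor : (count (fun q => below_right s p q != below_right s r q) X <=
             count (fun q => (q.1 <= p.1)%R != (q.1 <= r.1)%R) X +
             count (fun q => (intercept s q < intercept s p)%R
                             != (intercept s q < intercept s r)%R) X)%N.
  apply: count_le_add => q; rewrite /below_right (ltNge p.1) (ltNge r.1).
  by case: (q.1 <= p.1); case: (q.1 <= r.1);
     case: (intercept s q < _); case: (intercept s q < _).
apply: le_trans (frac_dist_le _ _ _) _.
rewrite /frac ler_pdivrMr ?ltr0n // mulrAC ler_pdivlMr ?ltr0n //.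
suff : (count (fun q => below_right s p q != below_right s r q) X * k <= 2 * size X)%N.
  by rewrite -(ler_nat R) !natrM.
move: hx hy hxor.
set cx := count (fun q : pt2 => (q.1 <= p.1)%R != (q.1 <= r.1)%R) X.
set cy := count (fun q : pt2 => (intercept s q < intercept s p)%R
                               != (intercept s q < intercept s r)%R) X.
set c := count (fun q : pt2 => below_right s p q != below_right s r q) X.
move=> hx hy hxor; have := leq_mul hxor (leqnn k); lia.
Qed.

End Grid.

Lemma mean_below_right_dist_le (s eps : R) (A X : seq pt2) (k : nat) :
  (0 < size A)%N -> (0 < size X)%N -> (0 < k)%N -> {subset A <= X} ->
  eps_approx eps A X ->
  `|mean A (fun p => frac X (below_right s p)) - mean X (fun p => frac X (below_right s p))|
    <= (k.+1 ^ 2)%:R * eps + 4 / k%:R.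
Proof.
move=> A0 X0 k0 sAX approx.
apply: le_trans (@mean_partition_dist_le _ _ (grid_cell s X k) A X _ eps (2 / k%:R)%R
  A0 X0 sAX _ _ _) _; last by rewrite card_prod card_ord mulnn; lra.
- move=> [i j]; pose Ix v := quantile_index X k (fun q => q.1 <= v) == i.
  pose Iy v := quantile_index X k (fun q => intercept s q < v) == j.
  have convx : convex_pred Ix.
    apply: convex_pred_level => a b ab; apply: quantile_index_mono => q /= qa.
    exact: le_trans ab.
  have convy : convex_pred Iy.
    apply: convex_pred_level => a b ab; apply: quantile_index_mono => q /= qa.
    exact: lt_le_trans ab.
  exact: (@eps_approx_sheared_box s eps A X Ix Iy).
- move=> p r _ _ /grid_cell_eq[ex ey]; exact: frac_below_right_osc.
- move=> p; rewrite /frac divr_ge0 ?ler0n //=.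
  have [->|Xn0] := posnP (size X); first by rewrite invr0 mulr0.
  by rewrite ler_pdivrMr ?ltr0n // mul1r ler_nat count_size.
Qed.

Lemma slopeC (a b : pt2) : slope a b = slope b a.
Proof. by rewrite /slope !RdivE !RminusE -[b.2 - a.2]opprB -[b.1 - a.1]opprB invrN mulrNN. Qed.

Lemma slope_lt_intercept (s : R) (a b : pt2) : a.1 < b.1 ->
  (slope a b < s) = (intercept s b < intercept s a).
Proof.
move=> ab; rewrite /slope RdivE !RminusE ltr_pdivrMr ?subr_gt0 // /intercept.
by apply/idP/idP => h; lra.
Qed.

Lemma slope_lt_below_right (s : R) (a b : pt2) : a.1 != b.1 ->
  nat_of_bool (slope a b < s) = (below_right s a b + below_right s b a)%N.
Proof.
rewrite /below_right; case: (ltgtP a.1 b.1) => // [ab|ba] _.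
- by rewrite slope_lt_intercept //= addn0.
- by rewrite slopeC slope_lt_intercept.
Qed.

Lemma sum_ltn_pairs (n : nat) (F : 'I_n -> 'I_n -> nat) : (forall i, F i i = 0%N) ->
  (\sum_(i < n) \sum_(j < n | i < j) (F i j + F j i) = \sum_(i < n) \sum_(j < n) F i j)%N.
Proof.
move=> F0.
have -> : (\sum_(i < n) \sum_(j < n) F i j = \sum_(i < n) \sum_(j < n) ((i < j) * F i j)
                                         + \sum_(i < n) \sum_(j < n) ((j < i) * F i j))%N.
  rewrite -big_split; apply: eq_bigr => i _; rewrite -big_split; apply: eq_bigr => j _ /=.
  by case: ltngtP => [||/val_inj ->]; rewrite ?mul1n ?mul0n ?addn0 ?F0.
rewrite [X in (_ = _ + X)%N]exchange_big -big_split; apply: eq_bigr => i _.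
rewrite big_mkcond -big_split; apply: eq_bigr => j _ /=.
by case: (i < j)%N; rewrite ?mul1n ?mul0n.
Qed.

Lemma npairs_below_count (Y : seq pt2) (s : R) : uniq (map fst Y) ->
  npairs_below Y s = (\sum_(p <- Y) count (below_right s p) Y)%N.
Proof.
move=> Yu; pose y (i : 'I_(size Y)) := nth (0, 0) Y i.
have y1_neq i j : i != j -> (y i).1 != (y j).1.
  move=> ij; rewrite /y -!(nth_map (0, 0) 0) //.
  by rewrite (nth_uniq 0 _ _ Yu) ?size_map.
rewrite (big_nth (0, 0)) big_mkord.
have -> : (\sum_(i < size Y) count (below_right s (nth (0%R, 0%R) Y i)) Y =
           \sum_(i < size Y) \sum_(j < size Y) below_right s (y i) (y j))%N.
  apply: eq_bigr => i _; rewrite -sum1_count big_mkcond (big_nth (0, 0)) big_mkord.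
  by apply: eq_bigr => j _; case: below_right.
rewrite -sum_ltn_pairs => [|i]; last by rewrite /below_right ltxx.
apply: eq_bigr => i _; apply: eq_bigr => j ij; apply: slope_lt_below_right.
by apply: y1_neq; apply: contraTneq ij => ->; rewrite ltnn.
Qed.

Definition psi (Y : seq pt2) (s : R) : R := mean Y (fun p => frac Y (below_right s p)).

Lemma psiE (Y : seq pt2) (s : R) : uniq (map fst Y) ->
  psi Y s = (npairs_below Y s)%:R / (size Y)%:R ^+ 2.
Proof.
move=> Yu; rewrite /psi /mean /frac -mulr_suml -natr_sum -npairs_below_count //.
by rewrite -mulrA -invfM -expr2.
Qed.

Lemma bin2_double (n : nat) : ('C(n, 2) * 2 = n * n.-1)%N.
Proof. by elim: n => // n IH; rewrite binS bin1 mulnDl IH; case: n {IH} => //= n; nia. Qed.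

(* [rho] normalises by [C(n,2)] pairs, [psi] by [n^2] ordered pairs. *)
Lemma rho_psi_dist_le (Y : seq pt2) (s : R) : uniq (map fst Y) -> (2 <= size Y)%N ->
  `|rho Y s - 2 * psi Y s| <= 4 / (size Y)%:R.
Proof.
move=> Yu Y2; rewrite psiE // /rho RdivE.
have NY : (npairs_below Y s <= size Y ^ 2)%N.
  rewrite npairs_below_count // -mulnn -[X in (_ <= X * _)%N]count_predT -sum1_count.
  by rewrite big_distrl /= leq_sum // => p _; rewrite mul1n count_size.
have C2 : ('C(size Y, 2))%:R = (size Y)%:R * ((size Y)%:R - 1) / 2 :> R.
  rewrite -[_%:R](mulfK (_ : 2 != 0)) ?pnatr_eq0 // -natrM bin2_double natrM.
  by rewrite -subn1 natrB ?(leq_trans _ Y2).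
move: NY; rewrite -(ler_nat R) natrX C2.
set N := (npairs_below Y s)%:R; set n := (size Y)%:R => NY.
have n2 : 2 <= n by rewrite (ler_nat R 2).
have N0 : 0 <= N := ler0n _ _.
have -> : N / (n * (n - 1) / 2) - 2 * (N / n ^+ 2) = 2 * N / (n ^+ 2 * (n - 1)).
  by field; apply/andP; split; apply/eqP; lra.
have d0 : 0 < n ^+ 2 * (n - 1) by apply: mulr_gt0; [apply: exprn_gt0|]; lra.
rewrite ger0_norm; last by apply: divr_ge0 => //; lra.
rewrite ler_pdivrMr // (_ : 4 / n * (n ^+ 2 * (n - 1)) = 4 * n * (n - 1)); last first.
  by field; apply/eqP; lra.
rewrite expr2 in NY; nra.
Qed.

Lemma psi_dist_le (s eps : R) (A X : seq pt2) (k : nat) :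
  (0 < size A)%N -> (0 < size X)%N -> (0 < k)%N -> {subset A <= X} ->
  eps_approx eps A X ->
  `|psi A s - psi X s| <= eps + ((k.+1 ^ 2)%:R * eps + 4 / k%:R).
Proof.
move=> A0 X0 k0 sAX approx.
apply: le_trans (ler_distD (mean A (fun p => frac X (below_right s p))) _ _) _.
apply: lerD; last exact: mean_below_right_dist_le.
by apply: mean_dist_le => // p _; apply: eps_approx_below_right.
Qed.

(* The grid size [k ~ eps^(-1/3)] balances the two error terms. *)
Lemma exists_grid_size (eps : R) : 0 < eps -> eps <= 1 ->
  exists2 k, (0 < k)%N & (k.+1 ^ 2)%:R * eps + 4 / k%:R <= 12 * eps `^ 3%:R^-1.
Proof.
move=> eps0 eps1; set e := eps `^ _.
have e0 : 0 < e := powR_gt0 _ eps0.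
have e3 : e * (e * e) = eps.
  rewrite -expr2 -exprS /e -powR_mulrn ?powR_ge0 // -powRrM.
  by rewrite mulVf ?pnatr_eq0 // powRr1 // ltW.
have e1 : e <= 1 by nra.
set t := e^-1; have te : t * e = 1 by rewrite mulVf ?gt_eqF.
have t1 : 1 <= t by rewrite invf_ge1.
exists (Num.trunc t); first by rewrite truncn_gt0.
have tk : (Num.trunc t)%:R <= t by rewrite truncn_le; lra.
have kt : t < (Num.trunc t).+1%:R by rewrite -truncn_le_nat.
have kS : (Num.trunc t).+1%:R = (Num.trunc t)%:R + 1 :> R by rewrite -addn1 natrD.
rewrite natrX kS; rewrite kS in kt; set K := (Num.trunc t)%:R in tk kt *.
have K1 : 1 <= K by rewrite /K ler1n truncn_gt0.
have B1 : (K + 1) ^+ 2 * eps <= 4 * e.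
  have sq : (K + 1) ^+ 2 <= 4 * (t * t) by rewrite expr2; nra.
  rewrite -e3; apply: le_trans (ler_wpM2r _ sq) _; first nra.
  have -> : 4 * (t * t) * (e * (e * e)) = 4 * e * ((t * e) * (t * e)) by ring.
  by rewrite te !mulr1.
have B2 : 4 / K <= 8 * e by rewrite ler_pdivrMr; nra.
lra.
Qed.

Lemma uniq_map_inj_in (T U : eqType) (f : T -> U) (s : seq T) :
  uniq (map f s) -> {in s &, injective f}.
Proof.
elim: s => //= x s IH /andP[fx su] p q; rewrite !inE.
move=> /orP[/eqP ->|ps] /orP[/eqP ->|qs] //= e.
- by move: fx; rewrite e map_f.
- by move: fx; rewrite -e map_f.
- exact: IH.
Qed.

Theorem mainTheorem6 :
  exists C : R, forall (eps : R) (X A : seq pt2),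
    0 < eps -> eps <= 1 ->
    uniq (map fst X) ->
    uniq A -> {subset A <= X} ->
    eps_approx eps A X ->
    (2 <= size A)%N -> eps^-1 <= (size A)%:R ->
    forall s : R, `| rho X s - rho A s | <= C * eps `^ (3%:R^-1).
Proof.
exists 34 => eps X A eps0 eps1 Xu Au sAX approx A2 epsA s.
have AX : (size A <= size X)%N := uniq_leq_size Au sAX.
have X2 : (2 <= size X)%N := leq_trans A2 AX.
have Afu : uniq (map fst A).
  by rewrite map_inj_in_uniq // => p q /sAX pX /sAX qX; apply: (uniq_map_inj_in Xu).
have m0 : 0 < (size A)%:R :> R by rewrite ltr0n (leq_trans _ A2).
have mn : (size A)%:R <= (size X)%:R :> R by rewrite ler_nat.
have epsm : 1 <= eps * (size A)%:R.
  by have := ler_wpM2l (ltW eps0) epsA; rewrite mulfV ?gt_eqF.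
have invA : 4 / (size A)%:R <= 4 * eps by rewrite ler_pdivrMr //; nra.
have invX : 4 / (size X)%:R <= 4 * eps by rewrite ler_pdivrMr; nra.
have [k k0 kbound] := exists_grid_size eps0 eps1.
have epse : eps <= eps `^ 3%:R^-1 by apply: ger1_powR; rewrite ?eps0 ?eps1 // invf_le1 ?ler1n.
have := psi_dist_le s (ltnW A2) (ltnW X2) k0 sAX approx.
have := rho_psi_dist_le s Afu A2; have := rho_psi_dist_le s Xu X2.
rewrite !ler_norml => /andP[hX1 hX2] /andP[hA1 hA2] /andP[hp1 hp2].
by apply/andP; split; lra.
Qed.
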